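(* The bracket induced on $\mathbf T_{m+1}$ by ${\rm PB}_1({\rm R};\mathcal F)$ is given, for $1\le i,j\le m$ and all $k$, by $\{b_k,b_{k+1}\}_1=\alpha a_k^{(1)}$; $\{b_k,a_k^{(j)}\}_1=-a_k^{(j)}$, $\{a_k^{(j)},b_{k+j}\}_1=-a_k^{(j)}$; $\{b_k,a_{k+1}^{(j)}\}_1=\alpha a_k^{(j+1)}$, $\{a_k^{(j)},b_{k+j+1}\}_1=\alpha a_k^{(j+1)}$; $\{a_k^{(i)},a_{k+i}^{(j)}\}_1=-a_k^{(i+j)}$; $\{a_k^{(i)},a_{k+i+1}^{(j)}\}_1=\alpha a_k^{(i+j+1)}$; all other brackets between coordinates (except those obtained by antisymmetry) vanish. (Here $N\ge2m+2$.)
   Context: Periodic lattice setting: $N\ge2$, $m\ge1$; $\mathfrak g=\{X(\lambda)\in gl(N)[\lambda,\lambda^{-1}]:\Omega X(\lambda)\Omega^{-1}=X(\omega\lambda)\}$, $\omega=e^{2\pi i/N}$, $\Omega=\mathrm{diag}(1,\omega,\dots,\omega^{N-1})$, matrix indices and lattice subscripts modulo $N$; $\langle X,Y\rangle$ = coefficient of $\lambda^0$ in $\mathrm{tr}(XY)$; $\pi_+,\pi_-$ projections onto nonnegative, resp. negative, powers of $\lambda$ (graded pieces $\mathfrak g_p=\{\lambda^p\sum_{j-k\equiv p}x_{jk}E_{jk}\}$); ${\rm R}=\pi_+-\pi_-$. Gradient: $\langle\nabla\varphi(L),M\rangle=\frac{d}{d\varepsilon}\varphi(L+\varepsilon M)|_{\varepsilon=0}$.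 $\alpha$ real; $\mathcal E=\lambda\sum_kE_{k+1,k}$; $\mathcal F=I-\alpha\mathcal E$. $[X,Y]^{(\mathcal F)}=X\mathcal FY-Y\mathcal FX$; ${\rm PB}_1({\rm R};\mathcal F)$: $\{\varphi,\psi\}_1(L)=\frac12\langle[{\rm R}\nabla\varphi,\nabla\psi]^{(\mathcal F)}+[\nabla\varphi,{\rm R}\nabla\psi]^{(\mathcal F)},L\rangle$. $\mathbf T_{m+1}$ (a Poisson submanifold for this bracket) = set of $T=\mathcal E+\sum_kb_kE_{kk}+\sum_{j=1}^m\lambda^{-j}\sum_ka_k^{(j)}E_{k,k+j}$; coordinates $b_k(X)$ = coefficient of $\lambda^0E_{kk}$, $a_k^{(j)}(X)$ = coefficient of $\lambda^{-j}E_{k,k+j}$; convention $a_k^{(i)}=0$ for $i>m$. *)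

From HB Require Import structures.
From mathcomp Require Import all_boot all_order all_algebra.
From mathcomp Require Import boolp classical_sets fsbigop.
Set Implicit Arguments.
Unset Strict Implicit.
Unset Printing Implicit Defensive.
Import Order.TTheory GRing.Theory Num.Theory.
Local Open Scope ring_scope.

(* Throughout, the matrix size is N := n.+1 and C is the ground field (e.g. C).
   A loop X(lambda) = sum_p lambda^p X_p is represented by its coefficient
   function p |-> X_p (with p : int). *)
Section Loops.
Variables (C : numClosedFieldType) (n : nat).
Local Notation N := n.+1.

Definition loop := int -> 'M[C]_N.

Definition sh (k : 'I_N) (j : nat) : 'I_N := inord ((k + j) %% N).

(* the twisted loop algebra g: Laurent polynomials (finite support) whose
   lambda^p coefficient lies in g_p, i.e. is supported on entries (j,k)
   with j - k = p mod N *)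
Definition in_g (X : loop) : Prop :=
  (exists K : nat, forall p : int, (K < `|p|)%N -> X p = 0) /\
  (forall (p : int) (r c : 'I_N), X p r c != 0 ->
     (N%:Z %| (r%:Z - c%:Z - p))%Z).

Definition ladd (X Y : loop) : loop := fun p => X p + Y p.
Definition lsub (X Y : loop) : loop := fun p => X p - Y p.
Definition lscale (t : C) (X : loop) : loop := fun p => t *: X p.

(* product of Laurent matrix polynomials (finite sums: X has finite support) *)
Definition lmul (X Y : loop) : loop :=
  fun p => (\sum_(q \in [set: int]) (X q *m Y (p - q)))%R.

Definition pairing (X Y : loop) : C := \tr (lmul X Y 0).

Definition pi_plus (X : loop) : loop := fun p => if (0 <= p)%R then X p else 0.
Definition pi_minus (X : loop) : loop := fun p => if (p < 0)%R then X p else 0.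
Definition Rop (X : loop) : loop := lsub (pi_plus X) (pi_minus X).

Definition Emat : 'M[C]_N := \matrix_(r, c) (r == sh c 1)%:R.
Definition calE : loop := fun p => if p == 1 then Emat else 0.
Definition calF (alpha : C) : loop :=
  fun p => if p == 0 then 1%:M else if p == 1 then - alpha *: Emat else 0.

Definition brF (alpha : C) (X Y : loop) : loop :=
  lsub (lmul (lmul X (calF alpha)) Y) (lmul (lmul Y (calF alpha)) X).

Definition pb1_grad (alpha : C) (GX GY L : loop) : C :=
  2^-1 * pairing (ladd (brF alpha (Rop GX) GY) (brF alpha GX (Rop GY))) L.

Definition deriv0 (f : C -> C) (d : C) : Prop :=
  forall e : C, 0 < e -> exists2 delta : C, 0 < delta &
    forall t : C, t \is Num.real -> t != 0 -> `|t| < delta ->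
      `|(f t - f 0) / t - d| < e.

Definition is_gradient (phi : loop -> C) (L G : loop) : Prop :=
  in_g G /\ forall M, in_g M -> deriv0 (fun t => phi (ladd L (lscale t M))) (pairing G M).

Definition PB1_is (alpha : C) (phi psi : loop -> C) (L : loop) (v : C) : Prop :=
  (exists G, is_gradient phi L G) /\ (exists G, is_gradient psi L G) /\
  forall G1 G2, is_gradient phi L G1 -> is_gradient psi L G2 ->
    pb1_grad alpha G1 G2 L = v.

Definition in_T (m : nat) (T : loop) : Prop :=
  exists (b : 'I_N -> C) (a : nat -> 'I_N -> C),
    T = fun p => if p == 1 then Emat
                 else if p == 0 then \matrix_(r, c) ((r == c)%:R * b r)
                 else if ((- (m%:Z) <= p) && (p <= -1))%R then
                   \matrix_(r, c) ((c == sh r `|p|%N)%:R * a `|p|%N r)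
                 else 0.

Inductive pcoord := Cb of 'I_N | Ca of nat & 'I_N.

Definition bcoord (k : 'I_N) (X : loop) : C := X 0 k k.
Definition acoord (j : nat) (k : 'I_N) (X : loop) : C := X (- (j%:Z)) k (sh k j).

Definition coordfun (c : pcoord) : loop -> C :=
  match c with Cb k => bcoord k | Ca j k => acoord j k end.

Definition valid_coord (m : nat) (c : pcoord) : bool :=
  match c with Cb _ => true | Ca j _ => (1 <= j <= m)%N end.

Definition aT (m i : nat) (k : 'I_N) (X : loop) : C :=
  if (i <= m)%N then acoord i k X else 0.

(* the listed (directed) brackets {c1,c2}_1 *)
Definition rule_val (alpha : C) (m : nat) (c1 c2 : pcoord) (X : loop) : C :=
  match c1, c2 with
  | Cb k, Cb l => if l == sh k 1 then alpha * aT m 1 k X else 0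
  | Cb k, Ca j l =>
      (if l == k then - aT m j k X else 0)
      + (if l == sh k 1 then alpha * aT m j.+1 k X else 0)
  | Ca j k, Cb l =>
      (if l == sh k j then - aT m j k X else 0)
      + (if l == sh k j.+1 then alpha * aT m j.+1 k X else 0)
  | Ca i k, Ca j l =>
      (if l == sh k i then - aT m (i + j) k X else 0)
      + (if l == sh k i.+1 then alpha * aT m (i + j).+1 k X else 0)
  end.

(* the full table: listed brackets, those obtained by antisymmetry, 0 otherwise *)
Definition expected (alpha : C) (m : nat) (c1 c2 : pcoord) (X : loop) : C :=
  rule_val alpha m c1 c2 X - rule_val alpha m c2 c1 X.

End Loops.

From HB Require Import structures.
From mathcomp Require Import all_boot all_order all_algebra.
From mathcomp Require Import boolp classical_sets fsbigop.
From mathcomp Require Import zify ring.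
Set Implicit Arguments.
Unset Strict Implicit.
Unset Printing Implicit Defensive.
Import Order.TTheory GRing.Theory Num.Theory.
Local Open Scope ring_scope.

(* The gradient of a coordinate function on T_{m+1} is a single monomial
   lambda^d E_{rc} with d >= 0 (d = 0 for b_k, d = j for a_k^{(j)}); it is
   unique because the pairing is nondegenerate on the twisted loop algebra.
   Since R = pi_+ - pi_- acts as the identity on such gradients, the PB_1 formula for two
   of them only sees the coefficients of T at lambda^{-(d1+d2)} and
   lambda^{-(d1+d2+1)}, paired with commutators of matrix units twisted by
   F_0 = I and F_1 = - alpha E; reading off the entries gives the table. *)

Section MatrixUnits.
Variable R : pzSemiRingType.

Lemma mul_delta_mx_entry m n p (i : 'I_m) (j : 'I_n) (A : 'M[R]_(n, p)) r c :
  (delta_mx i j *m A) r c = (r == i)%:R * A j c.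
Proof.
rewrite mxE (bigD1 j) //= big1 ?addr0 => [|l /negbTE ljF]; rewrite mxE.
  by rewrite eqxx andbT.
by rewrite ljF andbF mul0r.
Qed.

Lemma mul_mx_delta_entry m n p (A : 'M[R]_(m, n)) (i : 'I_n) (j : 'I_p) r c :
  (A *m delta_mx i j) r c = A r i * (c == j)%:R.
Proof.
rewrite mxE (bigD1 i) //= big1 ?addr0 => [|l /negbTE liF]; rewrite mxE.
  by rewrite eqxx.
by rewrite liF mulr0.
Qed.

Lemma mul_delta_mx_delta m n p q (i : 'I_m) (j : 'I_n) (k : 'I_p) (l : 'I_q)
    (A : 'M[R]_(n, p)) :
  delta_mx i j *m A *m delta_mx k l = A j k *: delta_mx i l.
Proof.
apply/matrixP => r c; rewrite mul_mx_delta_entry mul_delta_mx_entry !mxE.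
by case: (r == i); case: (c == l); rewrite ?mulr1 ?mul1r ?mulr0 ?mul0r.
Qed.

Lemma mxtrace_delta_mul m n (i : 'I_m) (j : 'I_n) (A : 'M[R]_(n, m)) :
  \tr (delta_mx i j *m A) = A j i.
Proof.
rewrite /mxtrace (bigD1 i) //= big1 ?addr0 => [|r /negbTE riF];
  rewrite mul_delta_mx_entry ?eqxx ?mul1r //.
by rewrite riF mul0r.
Qed.

End MatrixUnits.

Lemma mxtrace_delta_commutator (R : pzRingType) n (x y z w : 'I_n) (B A : 'M[R]_n) :
  \tr ((delta_mx x y *m B *m delta_mx z w - delta_mx z w *m B *m delta_mx x y) *m A)
  = B y z * A w x - B w x * A y z.
Proof.
by rewrite mulmxBl !mul_delta_mx_delta linearB /= -!scalemxAl !linearZ /=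
  !mxtrace_delta_mul.
Qed.

Lemma mxtrace_mul_delta (R : comPzRingType) m n (A : 'M[R]_(m, n)) (i : 'I_n) (j : 'I_m) :
  \tr (A *m delta_mx i j) = A j i.
Proof. by rewrite mxtrace_mulC mxtrace_delta_mul. Qed.

Lemma mulr_nat_imply (R : pzSemiRingType) (b P : bool) (x : R) :
  (b -> P) -> b%:R * (P%:R * x) = b%:R * x.
Proof. by case: b => [/(_ isT) ->|_]; rewrite ?mul1r ?mul0r. Qed.

Lemma fsbigT_seq (T : choiceType) (V : nmodType) (r : seq T) (F : T -> V) :
  uniq r -> (forall x, x \notin r -> F x = 0) ->
  \sum_(x \in [set: T]) F x = \sum_(x <- r) F x.
Proof.
move=> r_uniq F0; rewrite [RHS]fsbig_seq //; symmetry.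
by rewrite (fsbig_widen [set` r] setT) // => x [_ /negP/F0].
Qed.

Section Loops.
Variables (C : numClosedFieldType) (n : nat).
Local Notation N := n.+1.
Local Notation loop := (loop C n).
Implicit Types (k l : 'I_N) (L M G T : loop) (A B : 'M[C]_N).

Definition monomial (p : int) A : loop := fun q => if q == p then A else 0.

Lemma lmul_monomiall p A M : lmul (monomial p A) M = fun q => A *m M (q - p).
Proof.
apply: funext => q; rewrite /lmul (@fsbigT_seq _ _ [:: p]) // ?big_seq1 /monomial ?eqxx //.
by move=> r; rewrite inE => /negbTE ->; rewrite mul0mx.
Qed.

Lemma lmul_monomialr M p A : lmul M (monomial p A) = fun q => M (q - p) *m A.
Proof.
apply: funext => q; rewrite /lmul (@fsbigT_seq _ _ [:: q - p]) // ?big_seq1 /monomial.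
  by rewrite subKr eqxx.
move=> r; rewrite inE => qr; case: eqP => [Eqr|_]; last by rewrite mulmx0.
by move: qr; rewrite -Eqr subKr eqxx.
Qed.

Lemma pairing_monomialr M p A : pairing M (monomial p A) = \tr (M (- p) *m A).
Proof. by rewrite /pairing lmul_monomialr sub0r. Qed.

Lemma Rop_monomial p A : 0 <= p -> Rop (monomial p A) = monomial p A.
Proof.
move=> p_ge0; apply: funext => q; rewrite /Rop /lsub /pi_plus /pi_minus /monomial.
case: eqP => [->|_]; last by rewrite !if_same subr0.
by rewrite p_ge0 ltNge p_ge0 subr0.
Qed.

Lemma pb1_grad_monomial alpha (p q : nat) A B L :
  pb1_grad alpha (monomial p A) (monomial q B) L =
  \tr ((A *m 1%:M *m B - B *m 1%:M *m A) *m L (- (p + q)%N%:Z))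
  + \tr ((A *m (- alpha *: Emat C n) *m B - B *m (- alpha *: Emat C n) *m A)
          *m L (- (p + q).+1%:Z)).
Proof.
rewrite /pb1_grad !Rop_monomial // /brF.
set s := (p + q)%N%:Z.
set W := ladd _ _.
have -> : W = fun r => 2%:R *: (A *m calF n alpha (r - s) *m B - B *m calF n alpha (r - s) *m A).
  apply: funext => r; rewrite /W /ladd /lsub !lmul_monomialr !lmul_monomiall.
  have -> : r - q%:Z - p%:Z = r - s by rewrite /s PoszD; ring.
  have -> : r - p%:Z - q%:Z = r - s by rewrite /s PoszD; ring.
  by rewrite scaler_nat mulr2n.
rewrite /pairing /lmul (@fsbigT_seq _ _ [:: s; s + 1]); first last.
- move=> r; rewrite !inE negb_or => /andP [rs rs1].
  rewrite /calF ifF; last by apply: contraNF rs => /eqP ?; apply/eqP; lia.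
  rewrite ifF; last by apply: contraNF rs1 => /eqP ?; apply/eqP; lia.
  by rewrite !mulmx0 !mul0mx subrr scaler0 mul0mx.
- by rewrite /= inE; apply/negP => /eqP; lia.
rewrite big_cons big_seq1 subrr addrAC subrr add0r !sub0r /calF /=.
have -> : - (s + 1) = - (p + q).+1%:Z by rewrite /s; lia.
rewrite linearD /= -!scalemxAl !linearZ /= -mulrDr mulrA mulVf ?mul1r //.
by rewrite pnatr_eq0.
Qed.

Lemma in_g_monomial_delta p (r c : 'I_N) :
  (N%:Z %| r%:Z - c%:Z - p)%Z -> in_g (monomial p (delta_mx r c)).
Proof.
move=> Ndvd; split.
  by exists `|p|%N => q; rewrite /monomial; case: eqP => // ->; rewrite ltnn.
move=> q r' c'; rewrite /monomial; case: (q =P p) => [->|_]; last by rewrite mxE eqxx.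
by rewrite mxE; case: (r' =P r) => [->|_]; case: (c' =P c) => [->|_]; rewrite //= eqxx.
Qed.

Lemma in_g_pairing_inj G1 G2 : in_g G1 -> in_g G2 ->
  (forall M, in_g M -> pairing G1 M = pairing G2 M) -> G1 = G2.
Proof.
move=> [_ G1_supp] [_ G2_supp] G12; apply: funext => p; apply/matrixP => r c.
have [Ndvd|Nndvd] := boolP (N%:Z %| r%:Z - c%:Z - p)%Z; last first.
  by rewrite (eqP (contraNT (G1_supp p r c) Nndvd))
             (eqP (contraNT (G2_supp p r c) Nndvd)).
have Eg : in_g (monomial (- p) (delta_mx c r)).
  by apply: in_g_monomial_delta; case/dvdzP: Ndvd => z Ez; apply/dvdzP; exists (- z); lia.
by have := G12 _ Eg; rewrite !pairing_monomialr opprK !mxtrace_mul_delta.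
Qed.

Lemma sh_val k j : (sh k j : nat) = ((k + j) %% N)%N.
Proof. by rewrite /sh inordK // ltn_pmod. Qed.

Lemma sh_add k i j : sh (sh k i) j = sh k (i + j).
Proof. by apply: val_inj; rewrite /= !sh_val modnDml addnA. Qed.

Definition coord_deg (c : pcoord n) : nat :=
  match c with Cb _ => 0 | Ca j _ => j end.

Definition coord_unit (c : pcoord n) : 'M[C]_N :=
  match c with Cb k => delta_mx k k | Ca j k => delta_mx (sh k j) k end.

Definition coord_grad (c : pcoord n) : loop := monomial (coord_deg c) (coord_unit c).

Lemma pairing_coord_grad c M : pairing (coord_grad c) M = coordfun c M.
Proof.
by rewrite /pairing lmul_monomiall sub0r; case: c => [k|j k]; rewrite mxtrace_delta_mul.
Qed.

Lemma in_g_coord_grad c : in_g (coord_grad c).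
Proof.
case: c => [k|j k]; apply: in_g_monomial_delta; apply/dvdzP.
  by exists 0; rewrite mul0r subrr subr0.
exists (- ((k + j) %/ N)%N%:Z); rewrite /= sh_val.
have := divn_eq (k + j) N; lia.
Qed.

Lemma coordfun_lin c L M t :
  coordfun c (ladd L (lscale t M)) = coordfun c L + t * coordfun c M.
Proof. by case: c => [k|j k]; rewrite /= /bcoord /acoord /ladd /lscale !mxE. Qed.

Lemma is_gradient_coord c L : is_gradient (coordfun c) L (coord_grad c).
Proof.
split=> [|M _ e e_gt0]; first exact: in_g_coord_grad.
exists 1 => // t _ t_neq0 _.
rewrite !coordfun_lin mul0r addr0 addrAC subrr add0r mulrC mulKf //.
by rewrite pairing_coord_grad subrr normr0.
Qed.

(* The difference quotient of a coordinate is constant, which forces its derivative. *)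
Lemma is_gradient_coord_pairing c L G : is_gradient (coordfun c) L G ->
  forall M, in_g M -> pairing G M = coordfun c M.
Proof.
move=> [_ G_deriv] M M_in_g; apply/eqP; rewrite eq_sym -subr_eq0; apply/negP => Dneq0.
have D_gt0 : 0 < `|coordfun c M - pairing G M| by rewrite normr_gt0; apply/negP.
have [d d_gt0 quot_close] := G_deriv M M_in_g _ D_gt0.
have [hd_gt0 hd_lt] := midf_lt d_gt0; rewrite add0r in hd_gt0 hd_lt.
have := quot_close (d / 2) (gtr0_real hd_gt0) (lt0r_neq0 hd_gt0).
rewrite gtr0_norm // hd_lt => /(_ isT).
rewrite !coordfun_lin mul0r addr0 addrAC subrr add0r mulrC mulKf ?lt0r_neq0 //.
by rewrite distrC ltxx.
Qed.

Lemma is_gradient_coord_eq c L G : is_gradient (coordfun c) L G -> G = coord_grad c.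
Proof.
move=> G_grad; apply: in_g_pairing_inj; [by case: G_grad | exact: in_g_coord_grad |].
by move=> M M_in_g; rewrite (is_gradient_coord_pairing G_grad) // pairing_coord_grad.
Qed.

Lemma in_T_coef0 m T : in_T m T ->
  T 0 = \matrix_(r < N, c < N) ((r == c)%:R * bcoord r T).
Proof. by move=> [b [a ->]]; apply/matrixP => r c; rewrite !mxE /bcoord /= mxE eqxx mul1r. Qed.

Lemma in_T_coef_neg m T (s : nat) : in_T m T -> (0 < s)%N ->
  T (- s%:Z) = \matrix_(r, c) ((c == sh r s)%:R * aT m s r T).
Proof.
move=> [b [a ->]] s_gt0; rewrite /aT /acoord abszN absz_nat.
have [-> ->] : (- s%:Z == 1) = false /\ (- s%:Z == 0) = false by split; apply/eqP; lia.
case: (leqP s m) => [s_le_m|m_lt_s].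
  rewrite ifT; last by apply/andP; split; lia.
  by apply/matrixP => r c; rewrite !mxE eqxx mul1r.
rewrite ifF; last by apply/negbTE/negP => /andP []; lia.
by apply/matrixP => r c; rewrite !mxE mulr0.
Qed.

Ltac sh_implication := move=> /eqP ->; rewrite ?sh_add; apply/eqP; congr sh; lia.
Ltac case_eqb_ring :=
  repeat match goal with |- context [(?a == ?b)] => case: (a == b) end; rewrite /=; ring.

Lemma pb1_grad_coord alpha m c1 c2 T :
  valid_coord m c1 -> valid_coord m c2 -> in_T m T ->
  pb1_grad alpha (coord_grad c1) (coord_grad c2) T = expected alpha m c1 c2 T.
Proof.
move=> v1 v2 T_in; rewrite pb1_grad_monomial (in_T_coef_neg T_in (ltn0Sn _)).
case: c1 v1 => [k _|i k /andP [i_gt0 _]]; case: c2 v2 => [l _|j l /andP [j_gt0 _]] /=;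
  rewrite !mxtrace_delta_commutator !mxE ?add0n ?addn0 /expected /=.
{ rewrite oppr0 (in_T_coef0 T_in) !mxE [l == k]eq_sym.
  case: (k =P l) => [->|_] /=;
    [case: (l == sh l 1) | case: (k == sh l 1); case: (l == sh k 1)] => /=; ring. }
all: rewrite (in_T_coef_neg T_in); last lia.
(* Every entry is a product of lattice-congruence indicators; drop those implied
   by another factor, then split on the remaining ones. *)
all: rewrite !mxE !sh_add ?addn1 -!mulrA !mulr_nat_imply; try sh_implication.
- by case_eqb_ring.
- by case_eqb_ring.
- by rewrite [(j + i)%N]addnC; case_eqb_ring.
Qed.

End Loops.

(* [expected] subtracts the two directed rules rather than listing disjoint cases. *)
Theorem mainTheorem7 (C : numClosedFieldType) (n m : nat) (alpha : C) :
  (1 <= m)%N -> (2 * m + 2 <= n.+1)%N -> alpha \is Num.real ->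
  forall c1 c2 : pcoord n, valid_coord m c1 -> valid_coord m c2 ->
  forall T : loop C n, in_T m T ->
    PB1_is alpha (coordfun c1) (coordfun c2) T (expected alpha m c1 c2 T).
Proof.
move=> _ _ _ c1 c2 v1 v2 T T_in; split; [|split].
- by eexists; apply: is_gradient_coord.
- by eexists; apply: is_gradient_coord.
- move=> G1 G2 /is_gradient_coord_eq -> /is_gradient_coord_eq ->.
  exact: pb1_grad_coord.
Qed.
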